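(* Let $\vartheta\in\Theta$ and let $\Delta_T>0$ satisfy $0<\liminf_{T\to\infty}\Delta_T\le\limsup_{T\to\infty}\Delta_T\le\frac{1}{4\vartheta}$. Then $$\liminf_{T\to\infty}\frac{I_{T,0}(\vartheta)^{-1}+I_{T,\infty}(\vartheta)^{-1}}{I_{T,\Delta_T}(\vartheta)^{-1}}>1,$$ where $I_{T,0}(\vartheta)=T/\vartheta$, $I_{T,\infty}(\vartheta)=\frac{T\Delta_T^{-1}}{2\vartheta^2}$ and $I_{T,\Delta}(\vartheta)=T\Delta\,\varphi(\vartheta,\Delta)$. Equivalently, $\liminf_{T\to\infty}\vartheta\Delta_T(1+2\vartheta\Delta_T)\,\varphi(\vartheta,\Delta_T)>1$.
   Context: Under $\mathbb P_\vartheta$, $X_t=\sum_{i=1}^{N_t}\varepsilon_i$ ($X_0=0$), with $(N_t)$ a homogeneous Poisson process of intensity $\vartheta\in\Theta\subseteq(0,\infty)$ and $\varepsilon_i$ i.i.d., independent of $(N_t)$, $\mathbb P(\varepsilon_i=\pm1)=1/2$. Then $\mathbb P_\vartheta(X_\Delta=k)=e^{-\vartheta\Delta}\mathcal I_{|k|}(\vartheta\Delta)$, $k\in\mathbb Z$, with $\mathcal I_\nu(x)=\sum_{m\ge0}\frac{(x/2)^{2m+\nu}}{m!\,\Gamma(\nu+m+1)}$ the modified Bessel function of the first kind. Set $h_\Delta(\vartheta,k)=\mathcal I_{|k|+1}(\vartheta\Delta)/\mathcal I_{|k|}(\vartheta\Delta)$ and $\varphi(\vartheta,\Delta)=\mathbb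 E_\vartheta\big[\big(h_\Delta(\vartheta,X_\Delta)+(\vartheta\Delta)^{-1}|X_\Delta|-1\big)^2\big]$. *)

From Stdlib Require Import Reals ZArith ClassicalEpsilon.
Open Scope R_scope.

(* Value of a convergent real series sum_{n>=0} u n
   (chosen by classical description; 0 if the series diverges). *)
Definition series_value (u : nat -> R) : R :=
  epsilon (inhabits 0) (fun l => infinite_sum u l).

Definition zsum (u : Z -> R) : R :=
  u 0%Z + series_value (fun n => u (Z.of_nat (S n)) + u (- Z.of_nat (S n))%Z).

(* Modified Bessel function of the first kind, integer order nu:
   I_nu(x) = sum_{m>=0} (x/2)^(2m+nu) / (m! Gamma(nu+m+1)),  Gamma(nu+m+1) = (nu+m)! *)
Definition besselI (nu : nat) (x : R) : R :=
  series_value (fun m => (x / 2) ^ (2 * m + nu) / (INR (fact m) * INR (fact (nu + m)))).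

(* P_theta(X_Delta = k) = e^{-theta Delta} I_{|k|}(theta Delta) *)
Definition pmf (theta Delta : R) (k : Z) : R :=
  exp (- (theta * Delta)) * besselI (Z.abs_nat k) (theta * Delta).

Definition hD (Delta theta : R) (k : Z) : R :=
  besselI (S (Z.abs_nat k)) (theta * Delta) / besselI (Z.abs_nat k) (theta * Delta).

(* phi(theta,Delta) = E_theta[(h_Delta(theta,X_Delta) + (theta Delta)^{-1}|X_Delta| - 1)^2] *)
Definition phi (theta Delta : R) : R :=
  zsum (fun k => pmf theta Delta k *
         (hD Delta theta k + / (theta * Delta) * IZR (Z.abs k) - 1) ^ 2).

Definition I_T0 (theta T : R) : R := T / theta.
Definition I_Tinf (theta T Delta : R) : R := T * / Delta / (2 * theta ^ 2).
Definition I_TDelta (theta T Delta : R) : R := T * Delta * phi theta Delta.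

(* liminf_{T -> oo} f T > c  (in the extended reals) *)
Definition liminf_gt (f : R -> R) (c : R) : Prop :=
  exists c', c' > c /\ exists T0, forall T, T >= T0 -> f T >= c'.

(* limsup_{T -> oo} f T <= c *)
Definition limsup_le (f : R -> R) (c : R) : Prop :=
  forall eps, eps > 0 -> exists T0, forall T, T >= T0 -> f T <= c + eps.

From Stdlib Require Import Reals ZArith Lra Lia Psatz ClassicalEpsilon FunctionalExtensionality.
From Coquelicot Require Import Coquelicot.
Open Scope R_scope.

(* Write x = theta * Delta.  Clearing denominators, the information ratio of the
   theorem equals x (1 + 2x) phi(theta, Delta), so it suffices to show
   x (1 + 2x) phi >= 1 + x/20 whenever 0 < x <= 29/100, because the hypotheses on
   Delta_T eventually place x in [theta * c, 1/4 + 1/25] for some c > 0.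

   phi is a symmetric sum over k in Z of nonnegative weights w_|k|(x); we bound it
   below by its terms with |k| <= 2.  The file proceeds as follows:
   - series facts: the classical [series_value] agrees with Coquelicot's [Series],
     and a nonnegative series dominates its partial sums;
   - the Bessel series for 0 <= x < 2: lower bound by the first term, upper bound
     2 (x/2)^n on [0,1], and the recursion bound I_(n+1) <= (x/2) I_n;
   - the weights w_n(x): phi as a series of weights, its summability (geometric
     domination), and explicit lower bounds for w_0, w_1, w_2;
   - the elementary polynomial inequality closing the estimate, and the theorem. *)

Lemma series_value_Series (u : nat -> R) : ex_series u -> series_value u = Series u.
Proof.
  intros Hu.
  assert (Hsum : infinite_sum u (Series u)) by (apply is_series_Reals, Series_correct, Hu).
  unfold series_value.
  apply (uniqueness_sum u); [|exact Hsum].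
  exact (epsilon_spec (inhabits 0) (fun l => infinite_sum u l) (ex_intro _ _ Hsum)).
Qed.

Lemma is_series_geom_scal (c q : R) : 0 <= q < 1 ->
  is_series (fun n => c * q ^ n) (c / (1 - q)).
Proof.
  intros Hq. apply (is_series_scal_l c (fun n => q ^ n)).
  apply is_series_geom. rewrite Rabs_pos_eq; lra.
Qed.

Lemma Series_partial_le (a : nat -> R) (N : nat) :
  (forall n, 0 <= a n) -> ex_series a -> sum_f_R0 a N <= Series a.
Proof.
  intros Ha Hex.
  rewrite (Series_incr_n a (S N)) by (lia || exact Hex). simpl pred.
  assert (Hzero : Series (fun _ : nat => 0) = 0).
  { rewrite (Series_ext _ (fun _ : nat => 0 * 0)) by (intro; ring).
    rewrite Series_scal_l. ring. }
  assert (0 <= Series (fun k => a (S N + k)%nat)).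
  { rewrite <- Hzero. apply Series_le.
    - intro n. split; [lra | apply Ha].
    - apply (ex_series_incr_n a (S N)), Hex. }
  lra.
Qed.

Definition bessel_term (n : nat) (x : R) (m : nat) : R :=
  (x / 2) ^ (2 * m + n) / (INR (fact m) * INR (fact (n + m))).

Lemma INR_fact_ge1 (k : nat) : 1 <= INR (fact k).
Proof. apply (le_INR 1), lt_O_fact. Qed.

Lemma div_le_self (A D : R) : 0 <= A -> 1 <= D -> 0 <= A / D <= A.
Proof.
  intros HA HD. assert (H : A / D * D = A) by (field; lra).
  assert (0 <= A / D) by (apply Rdiv_le_0_compat; lra). split; nra.
Qed.

Lemma bessel_term_bounds (n : nat) (x : R) (m : nat) : 0 <= x ->
  0 <= bessel_term n x m <= (x / 2) ^ n * ((x / 2) ^ 2) ^ m.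
Proof.
  intros Hx. unfold bessel_term.
  replace ((x / 2) ^ (2 * m + n)) with ((x / 2) ^ n * ((x / 2) ^ 2) ^ m)
    by (rewrite pow_add, <- pow_mult; ring).
  pose proof (INR_fact_ge1 m); pose proof (INR_fact_ge1 (n + m)).
  assert (0 <= (x / 2) ^ n) by (apply pow_le; lra).
  assert (0 <= ((x / 2) ^ 2) ^ m) by (apply pow_le, pow_le; lra).
  apply div_le_self; [apply Rmult_le_pos | nra]; assumption.
Qed.

Lemma bessel_term_summable (n : nat) (x : R) : 0 <= x < 2 -> ex_series (bessel_term n x).
Proof.
  intros Hx.
  apply (@ex_series_le R_AbsRing R_CompleteNormedModule _
           (fun m => (x / 2) ^ n * ((x / 2) ^ 2) ^ m)).
  - intro m. destruct (bessel_term_bounds n x m) as [Hlo Hhi]; [lra|].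
    change (Rabs (bessel_term n x m) <= (x / 2) ^ n * ((x / 2) ^ 2) ^ m).
    rewrite Rabs_pos_eq; assumption.
  - eexists. apply is_series_geom_scal. split; [apply pow_le; lra | simpl; nra].
Qed.

Lemma besselI_Series (n : nat) (x : R) : 0 <= x < 2 -> besselI n x = Series (bessel_term n x).
Proof. intros Hx. apply series_value_Series, bessel_term_summable, Hx. Qed.

Lemma besselI_lower (n : nat) (x : R) : 0 <= x < 2 ->
  (x / 2) ^ n / INR (fact n) <= besselI n x.
Proof.
  intros Hx. rewrite besselI_Series by exact Hx.
  replace ((x / 2) ^ n / INR (fact n)) with (sum_f_R0 (bessel_term n x) 0)
    by (simpl; unfold bessel_term; rewrite Nat.add_0_r; simpl; f_equal; ring).
  apply Series_partial_le; [intro m; apply bessel_term_bounds; lra |].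
  apply bessel_term_summable, Hx.
Qed.

(* In particular I_n(x) > 0, so the ratios h_Delta are well defined. *)
Lemma besselI_pos (n : nat) (x : R) : 0 < x < 2 -> 0 < besselI n x.
Proof.
  intros Hx. eapply Rlt_le_trans; [|apply besselI_lower; lra].
  apply Rdiv_lt_0_compat; [apply pow_lt; lra | pose proof (INR_fact_ge1 n); lra].
Qed.

(* Geometric domination with ratio <= 1/4 gives I_n(x) <= 2 (x/2)^n on [0,1]. *)
Lemma besselI_upper (n : nat) (x : R) : 0 <= x <= 1 -> besselI n x <= 2 * (x / 2) ^ n.
Proof.
  intros Hx. rewrite besselI_Series by lra.
  assert (Hq : 0 <= (x / 2) ^ 2 <= 1 / 4) by (split; [apply pow_le; lra | simpl; nra]).
  assert (Hgeom := is_series_geom_scal ((x / 2) ^ n) ((x / 2) ^ 2) ltac:(lra)).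
  eapply Rle_trans.
  - apply Series_le; [intro m; apply bessel_term_bounds; lra | eexists; exact Hgeom].
  - rewrite (is_series_unique _ _ Hgeom).
    assert (0 <= (x / 2) ^ n) by (apply pow_le; lra).
    apply Rmult_le_reg_r with (1 - (x / 2) ^ 2); [lra|].
    unfold Rdiv. rewrite Rmult_assoc, Rinv_l by lra. nra.
Qed.

(* Termwise comparison of consecutive orders: (n+m+1)! >= (n+m)!. *)
Lemma bessel_term_succ_le (n : nat) (x : R) (m : nat) : 0 <= x ->
  bessel_term (S n) x m <= (x / 2) * bessel_term n x m.
Proof.
  intros Hx. unfold bessel_term.
  replace (2 * m + S n)%nat with (S (2 * m + n)) by lia.
  replace (S n + m)%nat with (S (n + m)) by lia.
  pose proof (INR_fact_ge1 m); pose proof (INR_fact_ge1 (n + m)).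
  assert (INR (fact (n + m)) <= INR (fact (S (n + m)))) by (apply le_INR, fact_le; lia).
  assert (0 <= (x / 2) ^ (2 * m + n)) by (apply pow_le; lra).
  rewrite <- tech_pow_Rmult. unfold Rdiv. rewrite Rmult_assoc.
  apply Rmult_le_compat_l; [lra|].
  apply Rmult_le_compat_l; [assumption|].
  apply Rinv_le_contravar; nra.
Qed.

(* I_(n+1)(x) <= (x/2) I_n(x); in particular h_Delta <= 1 for x <= 2. *)
Lemma besselI_succ_le (n : nat) (x : R) : 0 <= x < 2 ->
  besselI (S n) x <= (x / 2) * besselI n x.
Proof.
  intros Hx. rewrite !besselI_Series by exact Hx. rewrite <- Series_scal_l.
  apply Series_le.
  - intro m. split; [apply bessel_term_bounds; lra | apply bessel_term_succ_le; lra].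
  - apply (@ex_series_scal_l R_AbsRing R_NormedModule), bessel_term_summable, Hx.
Qed.

(* The contribution w_n(x) of the value k = n (and of k = -n) to phi, x = theta Delta. *)
Definition weight (x : R) (n : nat) : R :=
  exp (- x) * besselI n x * (besselI (S n) x / besselI n x + / x * INR n - 1) ^ 2.

Lemma phi_as_weights (theta Delta : R) :
  phi theta Delta = weight (theta * Delta) 0
    + series_value (fun n => 2 * weight (theta * Delta) (S n)).
Proof.
  unfold phi, zsum. f_equal. f_equal. apply functional_extensionality. intro n.
  assert (Habs : forall z, IZR (Z.abs z) = INR (Z.abs_nat z))
    by (intro z; rewrite <- Nat2Z.inj_abs_nat, <- INR_IZR_INZ; reflexivity).
  assert (Hopp : forall z, Z.abs_nat (- z) = Z.abs_nat z) by (intro z; destruct z; reflexivity).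
  unfold pmf, hD, weight. rewrite !Habs, Hopp, Zabs2Nat.id. ring.
Qed.

Lemma weight_nonneg (x : R) (n : nat) : 0 < x < 2 -> 0 <= weight x n.
Proof.
  intros Hx. unfold weight.
  pose proof (exp_pos (- x)); pose proof (besselI_pos n x Hx).
  apply Rmult_le_pos; [apply Rmult_le_pos; lra | apply pow2_ge_0].
Qed.

(* Since 0 <= h <= 1 and e^(-x) <= 1: w_n(x) <= I_n(x) (n/x + 1)^2. *)
Lemma weight_upper (x : R) (n : nat) : 0 < x <= 1 ->
  weight x n <= besselI n x * (/ x * INR n + 1) ^ 2.
Proof.
  intros Hx. unfold weight.
  pose proof (besselI_pos n x ltac:(lra)) as HJ.
  pose proof (besselI_pos (S n) x ltac:(lra)).
  pose proof (besselI_succ_le n x ltac:(lra)).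
  assert (Hratio : 0 <= besselI (S n) x / besselI n x <= 1).
  { split; [apply Rdiv_le_0_compat; lra|].
    apply Rmult_le_reg_r with (besselI n x); [lra|].
    unfold Rdiv. rewrite Rmult_assoc, Rinv_l by lra. nra. }
  assert (Hc : 0 <= / x * INR n)
    by (apply Rmult_le_pos; [left; apply Rinv_0_lt_compat; lra | apply pos_INR]).
  assert (Hexp : 0 < exp (- x) <= 1)
    by (split; [apply exp_pos | rewrite <- exp_0; left; apply exp_increasing; lra]).
  set (h := besselI (S n) x / besselI n x) in *.
  set (c := / x * INR n) in *.
  assert (Hsq : 0 <= (h + c - 1) ^ 2 <= (c + 1) ^ 2) by (split; [apply pow2_ge_0 | nra]).
  rewrite Rmult_assoc.
  apply Rle_trans with (1 * (besselI n x * (h + c - 1) ^ 2)).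
  - apply Rmult_le_compat_r; [apply Rmult_le_pos|]; lra.
  - rewrite Rmult_1_l. apply Rmult_le_compat_l; lra.
Qed.

(* w_0 >= e^(-x) (I_0 - 2 I_1) >= e^(-x) I_0 (1 - x) >= e^(-x) (1 - x). *)
Lemma weight0_lower (x : R) : 0 < x <= 1 -> exp (- x) * (1 - x) <= weight x 0.
Proof.
  intros Hx. unfold weight. change (INR 0) with 0.
  pose proof (besselI_pos 0 x ltac:(lra)) as HJ0.
  pose proof (besselI_pos 1 x ltac:(lra)) as HJ1.
  pose proof (besselI_lower 0 x ltac:(lra)) as Hlow; simpl in Hlow.
  pose proof (besselI_succ_le 0 x ltac:(lra)) as Hsucc.
  pose proof (exp_pos (- x)).
  set (J0 := besselI 0 x) in *. set (J1 := besselI 1 x) in *.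
  rewrite Rmult_assoc.
  replace (J0 * (J1 / J0 + / x * 0 - 1) ^ 2) with (J1 * (J1 / J0) + (J0 - 2 * J1))
    by (field; lra).
  assert (0 <= J1 * (J1 / J0)) by (apply Rmult_le_pos; [lra | apply Rdiv_le_0_compat; lra]).
  apply Rmult_le_compat_l; nra.
Qed.

(* For n >= x the shift n/x - 1 is nonnegative, so dropping h and bounding
   I_n from below gives an explicit lower bound on w_n. *)
Lemma weight_lower (x : R) (n : nat) : 0 < x <= INR n -> x < 2 ->
  exp (- x) * ((x / 2) ^ n / INR (fact n)) * (/ x * INR n - 1) ^ 2 <= weight x n.
Proof.
  intros Hx Hx2. unfold weight.
  pose proof (besselI_pos n x ltac:(lra)).
  pose proof (besselI_pos (S n) x ltac:(lra)).
  pose proof (besselI_lower n x ltac:(lra)).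
  pose proof (exp_pos (- x)).
  assert (Hc : 1 <= / x * INR n).
  { apply Rmult_le_reg_l with x; [lra|]. rewrite <- Rmult_assoc, Rinv_r by lra. lra. }
  assert (0 <= besselI (S n) x / besselI n x) by (apply Rdiv_le_0_compat; lra).
  apply Rmult_le_compat; [ | apply pow2_ge_0 | | nra].
  - apply Rmult_le_pos; [lra|]. apply Rdiv_le_0_compat;
      [apply pow_le; lra | pose proof (INR_fact_ge1 n); lra].
  - apply Rmult_le_compat_l; lra.
Qed.

Lemma square_le_pow4 (n : nat) : (INR n + 2) ^ 2 <= 4 * 4 ^ n.
Proof.
  induction n as [|n IH]; [simpl; lra|].
  rewrite S_INR. simpl pow in *. pose proof (pos_INR n). nra.
Qed.

Lemma weight_geometric_bound (x : R) (n : nat) : 0 < x <= 1 ->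
  2 * weight x (S n) <= (8 / x) * (2 * x) ^ n.
Proof.
  intros Hx.
  pose proof (weight_upper x (S n) Hx) as Hw.
  pose proof (besselI_upper (S n) x ltac:(lra)) as HJ.
  pose proof (besselI_pos (S n) x ltac:(lra)).
  pose proof (square_le_pow4 n).
  pose proof (pos_INR n).
  rewrite S_INR in Hw.
  assert (Hp : 0 <= (x / 2) ^ n) by (apply pow_le; lra).
  assert (Hix : 1 <= / x) by (rewrite <- Rinv_1; apply Rinv_le_contravar; lra).
  assert (Hsq : (/ x * (INR n + 1) + 1) ^ 2 <= (/ x * (INR n + 2)) ^ 2)
    by (apply pow_incr; nra).
  assert (Hprod : besselI (S n) x * (/ x * (INR n + 1) + 1) ^ 2
                  <= 2 * (x / 2) ^ S n * (/ x * (INR n + 2)) ^ 2)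
    by (apply Rmult_le_compat; [lra | apply pow2_ge_0 | lra | lra]).
  replace (2 * (x / 2) ^ S n * (/ x * (INR n + 2)) ^ 2)
    with (/ x * (x / 2) ^ n * (INR n + 2) ^ 2) in Hprod by (simpl pow; field; lra).
  replace ((8 / x) * (2 * x) ^ n) with (2 * (/ x * (x / 2) ^ n * (4 * 4 ^ n)))
    by (replace (2 * x) with (x / 2 * 4) by field; rewrite Rpow_mult_distr; field; lra).
  assert (/ x * (x / 2) ^ n * (INR n + 2) ^ 2 <= / x * (x / 2) ^ n * (4 * 4 ^ n))
    by (apply Rmult_le_compat_l; [apply Rmult_le_pos|]; lra).
  lra.
Qed.

Lemma weights_summable (x : R) : 0 < x < 1 / 2 -> ex_series (fun n => 2 * weight x (S n)).
Proof.
  intros Hx.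
  apply (@ex_series_le R_AbsRing R_CompleteNormedModule _ (fun n => (8 / x) * (2 * x) ^ n)).
  - intro n. change (Rabs (2 * weight x (S n)) <= 8 / x * (2 * x) ^ n).
    pose proof (weight_nonneg x (S n) ltac:(lra)).
    rewrite Rabs_pos_eq by lra. apply weight_geometric_bound; lra.
  - eexists. apply is_series_geom_scal. lra.
Qed.

Lemma polynomial_margin (x : R) : 0 < x <= 29 / 100 ->
  1 + x / 20 <= (1 + 2 * x) * (1 - x) * (1 - x ^ 2 + x ^ 3 / 4).
Proof.
  intros Hx.
  replace ((1 + 2 * x) * (1 - x) * (1 - x ^ 2 + x ^ 3 / 4))
    with (1 + x - 3 * x ^ 2 - 3 / 4 * x ^ 3 + 9 / 4 * x ^ 4 - x ^ 5 / 2) by field.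
  assert (0 <= x ^ 3) by (apply pow_le; lra).
  assert (0 <= x ^ 4) by (apply pow_le; lra).
  assert (x ^ 5 <= x ^ 4) by (simpl; nra).
  assert (x ^ 3 <= 29 / 100 * x ^ 2) by (simpl; nra).
  assert (x ^ 2 <= 29 / 100 * x) by (simpl; nra).
  nra.
Qed.

(* Key estimate: keeping w_0, w_1, w_2 and using e^(-x) >= 1 - x,
   x phi >= e^(-x) (1 - x^2 + x^3/4), whence x (1 + 2x) phi >= 1 + x/20. *)
Lemma phi_lower (theta Delta : R) : 0 < theta * Delta <= 29 / 100 ->
  1 + theta * Delta / 20
  <= theta * Delta * (1 + 2 * (theta * Delta)) * phi theta Delta.
Proof.
  intros Hx. rewrite phi_as_weights. set (x := theta * Delta) in *.
  assert (Hsum := weights_summable x ltac:(lra)).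
  rewrite series_value_Series by exact Hsum.
  assert (Hnonneg : forall n, 0 <= 2 * weight x (S n))
    by (intro n; pose proof (weight_nonneg x (S n) ltac:(lra)); lra).
  pose proof (Series_partial_le _ 1 Hnonneg Hsum) as Htail. simpl sum_f_R0 in Htail.
  pose proof (weight0_lower x ltac:(lra)) as H0.
  pose proof (weight_lower x 1 ltac:(simpl; lra) ltac:(lra)) as H1.
  pose proof (weight_lower x 2 ltac:(simpl; lra) ltac:(lra)) as H2.
  pose proof (exp_pos (- x)) as HE. pose proof (exp_ineq1_le (- x)) as HE1.
  set (E := exp (- x)) in *.
  assert (Hw1 : x * (2 * (E * ((x / 2) ^ 1 / INR (fact 1)) * (/ x * INR 1 - 1) ^ 2))
                = E * (1 - x) ^ 2) by (simpl; field; lra).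
  assert (Hw2 : x * (2 * (E * ((x / 2) ^ 2 / INR (fact 2)) * (/ x * INR 2 - 1) ^ 2))
                = E * (x * (2 - x) ^ 2 / 4)) by (simpl; field; lra).
  assert (Hweights : E * (1 - x ^ 2 + x ^ 3 / 4)
                     <= x * (weight x 0 + Series (fun n => 2 * weight x (S n)))).
  { assert (x * (E * (1 - x)) <= x * weight x 0) by (apply Rmult_le_compat_l; lra).
    assert (x * (2 * (E * ((x / 2) ^ 1 / INR (fact 1)) * (/ x * INR 1 - 1) ^ 2))
            <= x * (2 * weight x 1)) by (apply Rmult_le_compat_l; lra).
    assert (x * (2 * (E * ((x / 2) ^ 2 / INR (fact 2)) * (/ x * INR 2 - 1) ^ 2))
            <= x * (2 * weight x 2)) by (apply Rmult_le_compat_l; lra).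
    assert (x * (2 * weight x 1 + 2 * weight x 2)
            <= x * Series (fun n => 2 * weight x (S n))) by (apply Rmult_le_compat_l; lra).
    replace (E * (1 - x ^ 2 + x ^ 3 / 4))
      with (x * (E * (1 - x)) + E * (1 - x) ^ 2 + E * (x * (2 - x) ^ 2 / 4)) by field.
    nra. }
  pose proof (polynomial_margin x Hx).
  assert (HB : 0 <= 1 - x ^ 2 + x ^ 3 / 4) by (simpl; nra).
  assert ((1 - x) * (1 - x ^ 2 + x ^ 3 / 4) <= E * (1 - x ^ 2 + x ^ 3 / 4))
    by (apply Rmult_le_compat_r; lra).
  assert ((1 + 2 * x) * ((1 - x) * (1 - x ^ 2 + x ^ 3 / 4))
          <= (1 + 2 * x) * (x * (weight x 0 + Series (fun n => 2 * weight x (S n)))))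
    by (apply Rmult_le_compat_l; lra).
  nra.
Qed.

Lemma information_ratio (theta T D : R) : 0 < theta -> 0 < T -> 0 < D -> phi theta D <> 0 ->
  (/ I_T0 theta T + / I_Tinf theta T D) / (/ I_TDelta theta T D)
  = theta * D * (1 + 2 * (theta * D)) * phi theta D.
Proof.
  intros Htheta HT HD Hphi. unfold I_T0, I_Tinf, I_TDelta. field. lra.
Qed.

Theorem theorem5 (theta : R) (Delta : R -> R) :
  0 < theta ->
  (forall T, 0 < T -> 0 < Delta T) ->
  liminf_gt Delta 0 ->
  limsup_le Delta (1 / (4 * theta)) ->
  liminf_gt
    (fun T => (/ I_T0 theta T + / I_Tinf theta T (Delta T))
              / (/ I_TDelta theta T (Delta T)))
    1.
Proof.
  intros Htheta HDpos [c [Hc [T1 Hlow]]] Hsup.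
  (* Eventually theta * Delta T lies in [theta * c, 1/4 + 1/25] = [theta * c, 29/100]. *)
  destruct (Hsup (1 / (25 * theta))) as [T2 Hup]; [apply Rdiv_lt_0_compat; lra|].
  exists (1 + theta * c / 20). split; [nra|].
  exists (Rmax 1 (Rmax T1 T2)). intros T HT.
  pose proof (Rmax_l 1 (Rmax T1 T2)); pose proof (Rmax_r 1 (Rmax T1 T2)).
  pose proof (Rmax_l T1 T2); pose proof (Rmax_r T1 T2).
  assert (HDc : Delta T >= c) by (apply Hlow; lra).
  assert (HDu : Delta T <= 1 / (4 * theta) + 1 / (25 * theta)) by (apply Hup; lra).
  assert (Hx : 0 < theta * Delta T <= 29 / 100).
  { split; [nra|].
    replace (29 / 100) with (theta * (1 / (4 * theta) + 1 / (25 * theta))) by (field; lra).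
    apply Rmult_le_compat_l; lra. }
  pose proof (phi_lower theta (Delta T) Hx) as Hphi.
  assert (Hphi0 : phi theta (Delta T) <> 0) by (intro Hzero; rewrite Hzero in Hphi; nra).
  assert (HTpos : 0 < T) by lra.
  assert (HDT : 0 < Delta T) by (apply HDpos, HTpos).
  rewrite information_ratio by assumption.
  nra.
Qed.
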